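(* Let $r\ge0$ be an integer, $X=\mathbb{P}_{\mathbb{P}^1}(\mathcal{O}\oplus\mathcal{O}(r))$ the Hirzebruch surface, and let $Y$ be either $Y_0=\mathbb{P}_X(\mathcal{O}\oplus\mathcal{O}(sD'_0+tD'_3))$ with integers $s,t\ge0$, or $Y_1=\mathbb{P}_X(\mathcal{O}(sD'_0)\oplus\mathcal{O}(tD'_3))$ with integers $s,t>0$. Let $L$ be a nef line bundle on $Y$. Then $c_3(J_1(L))=0$ if and only if either $L=D_0$, or $r=0$ and $L=D_3$, or $s=t=0$ and $L=D_5$, or $(r,Y,L)$ is one of the following: (a) $r$ arbitrary, $Y=\mathbb{P}_X(\mathcal{O}\oplus\mathcal{O}(sD'_0+D'_3))$ with $s\ge0$, $L=D_0+D_5$; (b) $r$ arbitrary, $Y=\mathbb{P}_X(\mathcal{O}(D'_0)\oplus\mathcal{O}(D'_3))$, $L=D_0+D_5$; (c) $r=0$ (so $X=\mathbb{P}^1\times\mathbb{P}^1$), $Y=\mathbb{P}_X(\mathcal{O}\oplus\mathcal{O}(D'_0+tD'_3))$ with $t\ge0$, $L=D_3+D_5$; (d) $r=0$, $Y=\mathbb{P}_X(\mathcal{O}\oplus\mathcal{O}(2D'_0+2D'_3))$, $L=D_5$; (e) $r=1$, $Y=X\times\mathbb{P}^1$, $L=D_3+D_5$; (f) $r=1$, $Y=\mathbb{P}_X(\mathcal{O}\oplus\mathcal{O}(D'_0+2D'_3))$, $L=D_5$; (g) $r=1$, $Y=\mathbb{P}_X(\mathcal{O}\oplus\mathcal{O}(3D'_3))$,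 $L=D_5$; (h) $r=2$, $Y=\mathbb{P}_X(\mathcal{O}\oplus\mathcal{O}(2D'_3))$, $L=D_5$.
   Context: $X$ is the smooth projective toric surface with fan rays $\rho'_0=(1,0)$, $\rho'_1=(-1,r)$, $\rho'_2=(0,1)$, $\rho'_3=(0,-1)$, and $D'_i$ is the torus-invariant divisor of $\rho'_i$. The toric threefold $Y$ has rays $\rho_0=(1,0,s)$ if $Y=Y_0$ (resp. $\rho_0=(1,0,-s)$ if $Y=Y_1$), $\rho_1=(-1,r,0)$, $\rho_2=(0,1,0)$, $\rho_3=(0,-1,t)$, $\rho_4=(0,0,1)$, $\rho_5=(0,0,-1)$, and $D_i$ is the torus-invariant divisor of $\rho_i$. $X\times\mathbb{P}^1$ is the case $Y_0$ with $s=t=0$. $J_1(L)$ is the first jet bundle of $L$, fitting in $0\to\Omega_Y\otimes L\to J_1(L)\to L\to0$, and $c_3(J_1(L))$ is identified with its degree. *)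

From mathcomp Require Import all_boot all_order all_algebra.
Set Implicit Arguments. Unset Strict Implicit. Unset Printing Implicit Defensive.
Import Order.TTheory GRing.Theory Num.Theory.
Local Open Scope ring_scope.

Inductive kind := Y0 | Y1.

(* coordinate m (in 0..2) of the ray rho_i (i in 0..5) of the fan of Y *)
Definition rayc (k : kind) (r s t : nat) (i : 'I_6) (m : 'I_3) : int :=
  let v : int * int * int :=
    match val i with
    | 0%N => (1, 0, if k is Y0 then s%:Z else - s%:Z)
    | 1%N => (-1, r%:Z, 0)
    | 2%N => (0, 1, 0)
    | 3%N => (0, -1, t%:Z)
    | 4%N => (0, 0, 1)
    | _ => (0, 0, -1)
    end in
  match val m with 0%N => v.1.1 | 1%N => v.1.2 | _ => v.2 end.

(* maximal cones of the fan of X (pairs of indices of rho'_i) *)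
Definition maxConesX : seq (nat * nat) := [:: (0, 2); (2, 1); (1, 3); (3, 0)]%N.

Definition maxConeY (C : {set 'I_6}) : bool :=
  has (fun p : nat * nat =>
         (C == [set (inord p.1 : 'I_6); inord p.2; inord 4]) ||
         (C == [set (inord p.1 : 'I_6); inord p.2; inord 5])) maxConesX.

Definition coneY (S : {set 'I_6}) : bool :=
  [exists C : {set 'I_6}, maxConeY C && (S \subset C)].

(* T i j l = deg (D_i . D_j . D_l): the degree map on cubic monomials of the
   Chow ring  Z[x_0..x_5] / (Stanley-Reisner ideal + linear relations),
   normalized so that the class of a point (a maximal cone) has degree 1. *)
Definition IsIntersectionForm (k : kind) (r s t : nat)
    (T : 'I_6 -> 'I_6 -> 'I_6 -> int) : Prop :=
  [/\ (forall i j l, T i j l = T j i l /\ T i j l = T i l j),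
      (forall i j l, ~~ coneY [set i; j; l] -> T i j l = 0),
      (forall (m : 'I_3) j l, \sum_(i < 6) rayc k r s t i m * T i j l = 0)
    & (forall i j l, maxConeY [set i; j; l] -> T i j l = 1)].

(* torus invariant divisors  sum_i a_i D_i  *)
Definition divisor := 'I_6 -> int.
Definition D (n : nat) : divisor := fun i => (val i == n)%:R.
Definition addD (a b : divisor) : divisor := fun i => a i + b i.
Definition subD (a b : divisor) : divisor := fun i => a i - b i.

(* linear equivalence: a - b is the divisor of the character chi^m *)
Definition linEq (k : kind) (r s t : nat) (a b : divisor) : Prop :=
  exists m : 'I_3 -> int,
    forall i, a i - b i = \sum_(n < 3) m n * rayc k r s t i n.

Definition inter (T : 'I_6 -> 'I_6 -> 'I_6 -> int) (a b c : divisor) : int :=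
  \sum_(i < 6) \sum_(j < 6) \sum_(l < 6) a i * b j * c l * T i j l.

(* nef: nonnegative degree on every torus-invariant curve V(rho_i, rho_j) *)
Definition nef (T : 'I_6 -> 'I_6 -> 'I_6 -> int) (a : divisor) : Prop :=
  forall i j : 'I_6, i != j -> coneY [set i; j] ->
    0 <= inter T (D i) (D j) a.

(* From 0 -> Omega_Y (x) L -> J_1(L) -> L -> 0 and the
   generalized Euler sequence 0 -> Omega_Y -> (+)_i O(-D_i) -> O^3 -> 0,
   c(J_1(L)) = prod_{i=0}^5 (1 + L - D_i) * (1 + L)^(-2); its degree-3 part is
   e_3(u) - 2 L e_2(u) + 3 L^2 e_1(u) - 4 L^3,  u_i = L - D_i. *)
Definition c3J1 (T : 'I_6 -> 'I_6 -> 'I_6 -> int) (L : divisor) : int :=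
  let u (i : 'I_6) := subD L (D i) in
  (\sum_(i < 6) \sum_(j < 6 | (i < j)%N) \sum_(l < 6 | (j < l)%N)
      inter T (u i) (u j) (u l))
  - 2 * (\sum_(i < 6) \sum_(j < 6 | (i < j)%N) inter T L (u i) (u j))
  + 3 * (\sum_(i < 6) inter T L L (u i))
  - 4 * inter T L L L.

(* Pic(Y) is free on D0, D3, D5 (D1 ~ D0, D2 ~ D3 - r D0, D4 ~ D5 - t D3 - e s D0 with
   e = 1 on Y0 and e = -1 on Y1), and the axioms on T force the intersection form to be
   that of the Chow ring Z[x,y,z]/(x^2, y^2 - r x y, z^2 - e s x z - t y z), deg xyz = 1.
   Writing L ~ a D0 + b D3 + c D5, nefness says a, b, c >= 0 (and a >= s c on Y1), and
   deg c_3(J_1(L)) = 4 L^3 + 3 K L^2 + 2 c_2 L - 8 is an explicit cubic in a, b, c.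
   Its zeros on the nef cone are found by splitting variables into 0 or >= 1: on each
   piece the shifted cubic is either linear or has coefficients of one sign and a
   nonzero constant term, which is checked by a reflective positivity certificate. *)
From mathcomp Require Import all_boot all_order all_algebra.
From mathcomp Require Import zify ring.
Set Implicit Arguments. Unset Strict Implicit. Unset Printing Implicit Defensive.
Import Order.TTheory GRing.Theory Num.Theory.
Local Open Scope ring_scope.

Inductive iexpr :=
  | ICst of int | IVar of nat | IAdd of iexpr & iexpr | IOpp of iexpr | IMul of iexpr & iexpr.

Fixpoint ieval (x : seq int) (e : iexpr) : int :=
  match e with
  | ICst c => c
  | IVar k => x`_k
  | IAdd e1 e2 => ieval x e1 + ieval x e2
  | IOpp e1 => - ieval x e1
  | IMul e1 e2 => ieval x e1 * ieval x e2
  end.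

Section SparsePoly.
Variable n : nat.

Definition monomial := seq nat.
Definition mon1 : monomial := nseq n 0%N.
Definition monX (k : nat) : monomial := mkseq (fun i => nat_of_bool (i == k)) n.
Definition monM (m m' : monomial) : monomial := mkseq (fun i => nth 0 m i + nth 0 m' i)%N n.

Definition ipoly := seq (monomial * int).

(* Monomials are exponent vectors of length [n]; a variable index [k >= n] gives the
   zero polynomial, matching [ieval x (IVar k) = 0] when [size x = n]. *)
Fixpoint ipoly_of (e : iexpr) : ipoly :=
  match e with
  | ICst c => [:: (mon1, c)]
  | IVar k => if (k < n)%N then [:: (monX k, 1)] else [::]
  | IAdd e1 e2 => ipoly_of e1 ++ ipoly_of e2
  | IOpp e1 => [seq (q.1, - q.2) | q <- ipoly_of e1]
  | IMul e1 e2 => [seq (monM q.1 q'.1, q.2 * q'.2) | q <- ipoly_of e1, q' <- ipoly_of e2]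
  end.

Definition coef (p : ipoly) (m : monomial) : int :=
  foldr (fun q acc => if q.1 == m then q.2 + acc else acc) 0 p.

Definition positive_certificate (p : ipoly) : bool :=
  all (fun m => 0 <= coef p m) (unzip1 p) && (0 < coef p mon1).

Variable x : seq int.
Hypothesis size_x : size x = n.

Definition mon_eval (m : monomial) : int := \prod_(i < n) x`_i ^+ nth 0%N m i.
Definition peval (p : ipoly) : int := \sum_(q <- p) q.2 * mon_eval q.1.

Lemma mon_eval1 : mon_eval mon1 = 1.
Proof. by rewrite /mon_eval big1 // => i _; rewrite nth_nseq if_same expr0. Qed.

Lemma mon_evalX k : (k < n)%N -> mon_eval (monX k) = x`_k.
Proof.
move=> lt_kn; rewrite /mon_eval (bigD1 (Ordinal lt_kn)) //= big1 => [|i ik].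
  by rewrite nth_mkseq // eqxx expr1 mulr1.
by rewrite nth_mkseq //; move: ik; rewrite -val_eqE /= => /negbTE ->.
Qed.

Lemma mon_evalM m m' : mon_eval (monM m m') = mon_eval m * mon_eval m'.
Proof. by rewrite /mon_eval -big_split; apply: eq_bigr => i _; rewrite nth_mkseq // exprD. Qed.

Lemma ipoly_ofE e : peval (ipoly_of e) = ieval x e.
Proof.
rewrite /peval; elim: e => [c|k|e1 IH1 e2 IH2|e1 IH1|e1 IH1 e2 IH2] /=.
- by rewrite big_seq1 mon_eval1 mulr1.
- case: ltnP => [lt_kn|le_nk]; first by rewrite big_seq1 mon_evalX // mul1r.
  by rewrite big_nil nth_default // size_x.
- by rewrite big_cat IH1 IH2.
- by rewrite big_map -IH1 -sumrN; apply: eq_bigr => q _; rewrite mulNr.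
- rewrite big_allpairs_dep -IH1 -IH2 big_distrl; apply: eq_bigr => q _.
  rewrite big_distrr; apply: eq_bigr => q' _ /=.
  by rewrite mon_evalM mulrACA.
Qed.

Lemma coefE p m : coef p m = \sum_(q <- p | q.1 == m) q.2.
Proof. by elim: p => [|q p IH]; rewrite ?big_nil // big_cons /= IH. Qed.

Lemma coef_notin p m : m \notin unzip1 p -> coef p m = 0.
Proof.
move=> m_notin; rewrite coefE big1_seq // => q /andP[/eqP q1m q_in].
by move: m_notin; rewrite -q1m map_f.
Qed.

Lemma peval_coef p : peval p = \sum_(m <- undup (unzip1 p)) coef p m * mon_eval m.
Proof.
under [RHS]eq_bigr do rewrite coefE big_distrl.
rewrite (exchange_big_dep predT) //= /peval; apply: eq_big_seq => q q_in.
rewrite (eq_bigr (fun=> q.2 * mon_eval q.1)) => [|m /eqP <- //].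
have q1_pred1 : (fun m => q.1 == m) =1 pred1 q.1 by move=> m; exact: eq_sym.
rewrite -big_filter (eq_filter q1_pred1) filter_pred1_uniq ?big_seq1 //.
  exact: undup_uniq.
by rewrite mem_undup map_f.
Qed.

Lemma mon_eval_ge0 m : all (>= 0) x -> 0 <= mon_eval m.
Proof.
move=> /allP x_ge0; rewrite /mon_eval prodr_ge0 // => i _.
by rewrite exprn_ge0 // x_ge0 // mem_nth // size_x.
Qed.

Lemma peval_gt0 p :
  all (>= 0) x -> positive_certificate p -> 0 < peval p.
Proof.
move=> x_ge0 /andP[/allP coef_ge0 coef1_gt0].
have mon1_in : mon1 \in undup (unzip1 p).
  by rewrite mem_undup; apply: contraLR coef1_gt0 => /coef_notin ->.
rewrite peval_coef (bigD1_seq _ mon1_in (undup_uniq _)) /= mon_eval1 mulr1.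
rewrite ltr_pwDl // big_seq_cond sumr_ge0 // => m /andP[m_in _].
by rewrite mulr_ge0 ?mon_eval_ge0 // coef_ge0 // -mem_undup.
Qed.
End SparsePoly.

Lemma ieval_gt0 x e : all (>= 0) x ->
  positive_certificate (size x) (ipoly_of (size x) e) -> 0 < ieval x e.
Proof. by move=> x_ge0 cert; rewrite -(ipoly_ofE (erefl (size x))) peval_gt0. Qed.

Ltac add_atom x l :=
  let rec mem l' :=
    lazymatch l' with
    | x :: _ => constr:(true)
    | _ :: ?l'' => mem l''
    | _ => constr:(false)
    end in
  lazymatch mem l with true => l | false => constr:(x :: l) end.

Ltac int_atoms e l :=
  lazymatch e with
  | ?a + ?b => let l := int_atoms a l in int_atoms b l
  | ?a * ?b => let l := int_atoms a l in int_atoms b l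
  | - ?a => int_atoms a l
  | ?a ^+ _ => int_atoms a l
  | _%:R => l
  | 0 => l
  | 1 => l
  | Posz O => l
  | Posz (S ?k) => int_atoms (Posz k) l
  | _ => add_atom e l
  end.

Ltac int_index x l :=
  lazymatch l with
  | x :: _ => constr:(0%N)
  | _ :: ?l => let k := int_index x l in constr:(k.+1)
  end.

(* The reified term must be convertible to [e]: [x ^+ 2] unfolds to [x * x], not to
   [x * (x * 1)], and [Posz n.+1] is convertible to [1 + Posz n] but not to [Posz n + 1]. *)
Ltac int_reify l e :=
  lazymatch e with
  | ?a + ?b => let ra := int_reify l a in let rb := int_reify l b in constr:(IAdd ra rb)
  | ?a * ?b => let ra := int_reify l a in let rb := int_reify l b in constr:(IMul ra rb)
  | - ?a => let ra := int_reify l a in constr:(IOpp ra)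
  | _ ^+ O => constr:(ICst e)
  | ?a ^+ 1 => int_reify l a
  | ?a ^+ S ?k =>
    let ra := int_reify l a in let rb := int_reify l (a ^+ k) in constr:(IMul ra rb)
  | _%:R => constr:(ICst e)
  | 0 => constr:(ICst e)
  | 1 => constr:(ICst e)
  | Posz O => constr:(ICst e)
  | Posz (S ?k) => let rk := int_reify l (Posz k) in constr:(IAdd (ICst 1) rk)
  | _ => let k := int_index e l in constr:(IVar k)
  end.

Ltac int_positivity :=
  lazymatch goal with |- is_true (0 < ?e) =>
    let l := int_atoms e (@nil int) in
    let r := int_reify l e in
    change (0 < ieval l r); apply: ieval_gt0;
    [ rewrite /= ?le0z_nat;
      repeat match goal with h : is_true (0 <= ?v) |- context [0 <= ?v] => rewrite h end;
      done
    | vm_compute; reflexivity ]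
  end.

Ltac absurd_by_sign :=
  match goal with H : ?e = 0%R |- _ =>
    first [ have : 0 < e by int_positivity | have : 0 < - e by int_positivity ];
    by rewrite H ?oppr0 ltxx
  end.

Lemma int_split (x : int) : 0 <= x -> x = 0 \/ exists2 y : int, 0 <= y & x = y + 1.
Proof. by move=> x_ge0; case: (ltrP 0 x) => x0; [right; exists (x - 1) | left]; lia. Qed.

Ltac case_nonneg x :=
  lazymatch type of x with
  | nat => destruct x as [|x]
  | _ =>
    match goal with hx : is_true (0 <= x)%R |- _ =>
      let y := fresh "y" in let hy := fresh "hy" in let e := fresh "e" in
      case: (int_split hx) => [e|[y hy e]]; clear hx; subst x;
      try rename y into x; try rename hy into hx
    end
  end.

Definition i0 : 'I_6 := @Ordinal 6 0 isT.
Definition i1 : 'I_6 := @Ordinal 6 1 isT.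
Definition i2 : 'I_6 := @Ordinal 6 2 isT.
Definition i3 : 'I_6 := @Ordinal 6 3 isT.
Definition i4 : 'I_6 := @Ordinal 6 4 isT.
Definition i5 : 'I_6 := @Ordinal 6 5 isT.

Lemma ord6P (P : 'I_6 -> Prop) :
  P i0 -> P i1 -> P i2 -> P i3 -> P i4 -> P i5 -> forall i, P i.
Proof.
by move=> P0 P1 P2 P3 P4 P5 [[|[|[|[|[|[|//]]]]]] lt_i6];
  [move: P0 | move: P1 | move: P2 | move: P3 | move: P4 | move: P5];
  congr P; apply: val_inj.
Qed.

Lemma sum_ord6 (F : 'I_6 -> int) :
  \sum_(i < 6) F i = F i0 + F i1 + F i2 + F i3 + F i4 + F i5.
Proof.
rewrite !big_ord_recl big_ord0 addr0 !addrA.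
by congr (_ + _ + _ + _ + _ + _); congr F; apply: val_inj.
Qed.

Lemma sum_ord6_cond (P : pred 'I_6) (F : 'I_6 -> int) :
  \sum_(i < 6 | P i) F i = (if P i0 then F i0 else 0) + (if P i1 then F i1 else 0)
    + (if P i2 then F i2 else 0) + (if P i3 then F i3 else 0)
    + (if P i4 then F i4 else 0) + (if P i5 then F i5 else 0).
Proof. by rewrite big_mkcond sum_ord6. Qed.

Lemma sum_ord3 (F : 'I_3 -> int) :
  \sum_(m < 3) F m = F (@Ordinal 3 0 isT) + F (@Ordinal 3 1 isT) + F (@Ordinal 3 2 isT).
Proof.
rewrite !big_ord_recl big_ord0 addr0 !addrA.
by congr (_ + _ + _); congr F; apply: val_inj.
Qed.

Lemma maxConeYE C : maxConeY C =
  (C \in [:: [set i0; i2; i4]; [set i0; i2; i5]; [set i2; i1; i4]; [set i2; i1; i5];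
             [set i1; i3; i4]; [set i1; i3; i5]; [set i3; i0; i4]; [set i3; i0; i5]]).
Proof.
have inordE n (lt_n6 : (n < 6)%N) : inord n = Ordinal lt_n6 by apply: val_inj; rewrite /= inordK.
rewrite /maxConeY /= (inordE 0 isT) (inordE 1 isT) (inordE 2 isT) (inordE 3 isT).
by rewrite (inordE 4 isT) (inordE 5 isT) orbF !inE !orbA.
Qed.

Lemma maxConeY_pair_free (C : {set 'I_6}) : maxConeY C ->
  ~~ [|| (i0 \in C) && (i1 \in C), (i2 \in C) && (i3 \in C) | (i4 \in C) && (i5 \in C)].
Proof. by rewrite maxConeYE !inE => /or4P[|||/or4P[|||/orP[]]] /eqP ->; rewrite !inE. Qed.

Lemma coneY_pair_free (S : {set 'I_6}) :
  [|| (i0 \in S) && (i1 \in S), (i2 \in S) && (i3 \in S) | (i4 \in S) && (i5 \in S)] ->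
  ~~ coneY S.
Proof.
move=> pairS; apply/existsP => -[C /andP[/maxConeY_pair_free + /subsetP sSC]].
by apply/negP/negPn; case/or3P: pairS => /andP[/sSC-> /sSC->]; rewrite ?orbT.
Qed.

Lemma coneY_sub (S C : {set 'I_6}) : maxConeY C -> S \subset C -> coneY S.
Proof. by move=> maxC sSC; apply/existsP; exists C; rewrite maxC. Qed.

Lemma coneY_curves :
  [/\ coneY [set i2; i4], coneY [set i0; i4], coneY [set i0; i2] & coneY [set i2; i5]].
Proof.
split; [ apply: (@coneY_sub _ [set i0; i2; i4]) | apply: (@coneY_sub _ [set i0; i2; i4])
       | apply: (@coneY_sub _ [set i0; i2; i4]) | apply: (@coneY_sub _ [set i0; i2; i5]) ].
all: try by rewrite maxConeYE !inE eqxx ?orbT.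
all: by apply/subsetP => x; rewrite !inE => /orP[]/eqP->; rewrite eqxx ?orbT.
Qed.

Definition sgn (k : kind) : int := if k is Y0 then 1 else -1.

(* deg c_3(J_1(L)) for L ~ a D0 + b D3 + c D5, where [sg] is [e] of the header. *)
Definition c3poly (sg r s t a b c : int) : int :=
  -8 + 8 * (a + b + c) - 12 * (a * b + b * c + c * a) + 24 * a * b * c
  + t * c * (4 - 6 * c - 6 * a + 12 * a * c)
  + sg * s * c * (4 - 6 * c - 6 * b + 12 * b * c - 6 * t * c + 8 * t * c ^+ 2)
  + r * b * (4 - 6 * c - 6 * b + 12 * b * c)
  + r * t * c * (2 - 3 * c - 6 * b + 12 * b * c - 3 * t * c + 4 * t * c ^+ 2).

Section IntersectionForm.
Variables (k : kind) (r s t : nat) (T : 'I_6 -> 'I_6 -> 'I_6 -> int).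
Hypothesis HT : IsIntersectionForm k r s t T.

Definition coord0 (a : divisor) : int := a i0 + a i1 - r%:Z * a i2 - sgn k * s%:Z * a i4.
Definition coord3 (a : divisor) : int := a i2 + a i3 - t%:Z * a i4.
Definition coord5 (a : divisor) : int := a i4 + a i5.

Lemma D_ord (i j : 'I_6) : D i j = (j == i)%:R.
Proof. by []. Qed.

Lemma inter_D (i : 'I_6) b c : inter T (D i) b c = \sum_(j < 6) \sum_(l < 6) b j * c l * T i j l.
Proof.
rewrite /inter (bigD1 i) //= [X in _ + X]big1 ?addr0 => [|i' i'i].
  by apply: eq_bigr => j _; apply: eq_bigr => l _; rewrite D_ord eqxx mul1r.
by rewrite big1 // => j _; rewrite big1 // => l _; rewrite D_ord (negbTE i'i) !mul0r.
Qed.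

Lemma inter_sumD a b c : inter T a b c = \sum_(i < 6) a i * inter T (D i) b c.
Proof.
apply: eq_bigr => i _; rewrite inter_D big_distrr; apply: eq_bigr => j _ /=.
by rewrite big_distrr; apply: eq_bigr => l _; rewrite /= !mulrA.
Qed.

Lemma inter_rel m b c : \sum_(i < 6) rayc k r s t i m * inter T (D i) b c = 0.
Proof.
case: HT => _ _ rel _.
have -> : \sum_(i < 6) rayc k r s t i m * inter T (D i) b c =
    \sum_(i < 6) \sum_(j < 6) \sum_(l < 6) b j * c l * (rayc k r s t i m * T i j l).
  apply: eq_bigr => i _; rewrite inter_D big_distrr; apply: eq_bigr => j _.
  by rewrite big_distrr; apply: eq_bigr => l _ /=; ring.
rewrite exchange_big big1 // => j _; rewrite exchange_big big1 // => l _.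
by rewrite -big_distrr /= (rel m j l) mulr0.
Qed.

Lemma sgnE : (if k is Y0 then s%:Z else - s%:Z) = sgn k * s%:Z.
Proof. by case: k; rewrite /= ?mul1r ?mulN1r. Qed.

Lemma inter_coordl a b c : inter T a b c =
  coord0 a * inter T (D i0) b c + coord3 a * inter T (D i3) b c + coord5 a * inter T (D i5) b c.
Proof.
have := inter_rel (@Ordinal 3 0 isT) b c; have := inter_rel (@Ordinal 3 1 isT) b c.
have := inter_rel (@Ordinal 3 2 isT) b c.
rewrite inter_sumD !sum_ord6 /rayc /coord0 /coord3 /coord5 /= sgnE.
move: (inter T (D 0) b c) (inter T (D 1) b c) (inter T (D 2) b c) => G0 G1 G2.
move: (inter T (D 3) b c) (inter T (D 4) b c) (inter T (D 5) b c) => G3 G4 G5.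
move: (sgn k * s%:Z) => ss rel2 rel1 rel0.
have G1E : G1 = G0 by lia.
have G2E : G2 = G3 - r%:Z * G0 by move: rel1; rewrite G1E; lia.
have G4E : G4 = G5 - t%:Z * G3 - ss * G0 by lia.
by rewrite G1E G2E G4E; ring.
Qed.

Lemma T_sym12 i j l : T i j l = T j i l.
Proof. by case: HT => sym _ _ _; case: (sym i j l). Qed.

Lemma T_sym23 i j l : T i j l = T i l j.
Proof. by case: HT => sym _ _ _; case: (sym i j l). Qed.

Lemma T_pair_free i j l :
  [|| (i0 \in [set i; j; l]) && (i1 \in [set i; j; l]),
      (i2 \in [set i; j; l]) && (i3 \in [set i; j; l])
    | (i4 \in [set i; j; l]) && (i5 \in [set i; j; l])] -> T i j l = 0.
Proof. by move/coneY_pair_free; case: HT => _ vanish _ _; apply: vanish. Qed.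

Lemma T_max i j l : maxConeY [set i; j; l] -> T i j l = 1.
Proof. by case: HT => _ _ _; apply. Qed.

Lemma T_rel0 j l : T i0 j l = T i1 j l.
Proof. by case: HT => _ _ /(_ (@Ordinal 3 0 isT) j l) + _; rewrite sum_ord6 /rayc /=; lia. Qed.

Lemma T_rel1 j l : T i3 j l = r%:Z * T i1 j l + T i2 j l.
Proof. by case: HT => _ _ /(_ (@Ordinal 3 1 isT) j l) + _; rewrite sum_ord6 /rayc /=; lia. Qed.

Lemma T_rel2 j l : T i5 j l = sgn k * s%:Z * T i0 j l + t%:Z * T i3 j l + T i4 j l.
Proof.
case: HT => _ _ /(_ (@Ordinal 3 2 isT) j l) + _.
by rewrite sum_ord6 /rayc /= sgnE; lia.
Qed.

Lemma T_pairs_free l : [/\ T i1 i0 l = 0, T i2 i3 l = 0 & T i4 i5 l = 0].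
Proof. by split; apply: T_pair_free; rewrite !inE !eqxx ?orbT. Qed.

Lemma T_basis0 :
  [/\ T i0 i0 i0 = 0, T i0 i0 i3 = 0, T i0 i0 i5 = 0, T i0 i3 i3 = 0 & T i3 i3 i3 = 0].
Proof.
have T00 l : T i0 i0 l = 0 by rewrite T_rel0; case: (T_pairs_free l).
have T033 : T i0 i3 i3 = 0.
  rewrite T_sym12 T_sym23 T_rel1 T_sym23.
  by case: (T_pairs_free i3) => -> _ _; case: (T_pairs_free i0) => _ -> _; rewrite mulr0 addr0.
split=> //; rewrite T_rel1 -T_rel0 T033.
by case: (T_pairs_free i3) => _ -> _; rewrite mulr0 addr0.
Qed.

Lemma T_basis1 :
  [/\ T i0 i3 i5 = 1, T i0 i5 i5 = t%:Z, T i3 i3 i5 = r%:Z,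
      T i3 i5 i5 = r%:Z * t%:Z + sgn k * s%:Z
    & T i5 i5 i5 = r%:Z * t%:Z ^+ 2 + 2 * sgn k * s%:Z * t%:Z].
Proof.
have [_ _ T005 _ _] := T_basis0.
have T035 : T i0 i3 i5 = 1 by rewrite T_sym12 T_max // maxConeYE !inE eqxx ?orbT.
have T055 : T i0 i5 i5 = t%:Z.
  rewrite T_sym12 T_sym23 T_rel2 [T i0 i5 i0]T_sym23 T005.
  rewrite [T i3 i5 i0]T_sym23 [T i3 i0 i5]T_sym12 T035.
  by case: (T_pairs_free i0) => _ _ ->; ring.
have T335 : T i3 i3 i5 = r%:Z.
  by rewrite T_rel1 -T_rel0 T035; case: (T_pairs_free i5) => _ -> _; ring.
have T355 : T i3 i5 i5 = r%:Z * t%:Z + sgn k * s%:Z.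
  rewrite T_sym12 T_sym23 T_rel2 [T i0 i5 i3]T_sym23 T035 [T i3 i5 i3]T_sym23 T335.
  by case: (T_pairs_free i3) => _ _ ->; ring.
split=> //; rewrite T_rel2 T055 T355.
by case: (T_pairs_free i5) => _ _ ->; ring.
Qed.

(* The intersection form of the Chow ring of the header, in coordinates on D0, D3, D5. *)
Definition chow (x1 y1 z1 x2 y2 z2 x3 y3 z3 : int) : int :=
  (x1 * y2 * z3 + x1 * z2 * y3 + y1 * x2 * z3 + y1 * z2 * x3 + z1 * x2 * y3 + z1 * y2 * x3)
  + t%:Z * (x1 * z2 * z3 + z1 * x2 * z3 + z1 * z2 * x3)
  + r%:Z * (y1 * y2 * z3 + y1 * z2 * y3 + z1 * y2 * y3)
  + (r%:Z * t%:Z + sgn k * s%:Z) * (y1 * z2 * z3 + z1 * y2 * z3 + z1 * z2 * y3)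
  + (r%:Z * t%:Z ^+ 2 + 2 * sgn k * s%:Z * t%:Z) * (z1 * z2 * z3).

Lemma inter_sym12 a b c : inter T a b c = inter T b a c.
Proof.
rewrite /inter exchange_big; apply: eq_bigr => j _; apply: eq_bigr => i _.
by apply: eq_bigr => l _; rewrite T_sym12; ring.
Qed.

Lemma inter_sym23 a b c : inter T a b c = inter T a c b.
Proof.
rewrite /inter; apply: eq_bigr => i _; rewrite exchange_big; apply: eq_bigr => l _.
by apply: eq_bigr => j _; rewrite T_sym23; ring.
Qed.

Lemma inter_DDD (i j l : 'I_6) : inter T (D i) (D j) (D l) = T i j l.
Proof.
rewrite inter_D (bigD1 j) //= [X in _ + X]big1 ?addr0 => [|j' j'j].
  rewrite (bigD1 l) //= [X in _ + X]big1 ?addr0 => [|l' l'l].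
    by rewrite !D_ord !eqxx !mul1r.
  by rewrite !D_ord (negbTE l'l) mulr0 mul0r.
by rewrite big1 // => l' _; rewrite !D_ord (negbTE j'j) !mul0r.
Qed.

Lemma inter_coordm a b c : inter T a b c =
  coord0 b * inter T a (D i0) c + coord3 b * inter T a (D i3) c + coord5 b * inter T a (D i5) c.
Proof. by rewrite inter_sym12 inter_coordl !(inter_sym12 (D _)). Qed.

Lemma inter_coordr a b c : inter T a b c =
  coord0 c * inter T a b (D i0) + coord3 c * inter T a b (D i3) + coord5 c * inter T a b (D i5).
Proof. by rewrite inter_sym23 inter_coordm !(inter_sym23 a (D _)). Qed.

Lemma inter_coords a b c : inter T a b c =
  chow (coord0 a) (coord3 a) (coord5 a) (coord0 b) (coord3 b) (coord5 b)
       (coord0 c) (coord3 c) (coord5 c).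
Proof.
rewrite (inter_coordl a) !(inter_coordm (D _) b) !(inter_coordr (D _) (D _) c) !inter_DDD.
do 3 rewrite ?[T i3 i0 _]T_sym12 ?[T i5 i0 _]T_sym12 ?[T i5 i3 _]T_sym12
             ?[T _ i3 i0]T_sym23 ?[T _ i5 i0]T_sym23 ?[T _ i5 i3]T_sym23.
have [T000 T003 T005 T033 T333] := T_basis0.
have [T035 T055 T335 T355 T555] := T_basis1.
rewrite T000 T003 T005 T033 T333 T035 T055 T335 T355 T555 /chow.
ring.
Qed.

Lemma c3J1_coords L :
  c3J1 T L = c3poly (sgn k) r%:Z s%:Z t%:Z (coord0 L) (coord3 L) (coord5 L).
Proof.
rewrite /c3J1; do 3 rewrite ?sum_ord6 ?sum_ord6_cond /=.
rewrite !inter_coords /chow /coord0 /coord3 /coord5 /subD /D /c3poly /=.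
ring.
Qed.

(* The four coordinates are the degrees of [L] on the curves D2.D4, D0.D4, D0.D2, D2.D5. *)
Lemma nef_coords L : nef T L ->
  [/\ 0 <= coord0 L, 0 <= coord3 L, 0 <= coord5 L & 0 <= coord0 L + sgn k * s%:Z * coord5 L].
Proof.
move=> nefL; have [c24 c04 c02 c25] := coneY_curves.
split; [ have := nefL i2 i4 isT c24 | have := nefL i0 i4 isT c04
       | have := nefL i0 i2 isT c02 | have := nefL i2 i5 isT c25 ].
all: by rewrite inter_coords /chow /coord0 /coord3 /coord5 /D /=; congr (0 <= _); ring.
Qed.

Lemma linEq_coordsP a b : linEq k r s t a b <->
  coord0 a = coord0 b /\ coord3 a = coord3 b /\ coord5 a = coord5 b.
Proof.
split=> [[m ab_m]|[ab0 [ab3 ab5]]].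
  have aE i : a i = \sum_(n < 3) m n * rayc k r s t i n + b i.
    by apply/eqP; rewrite -subr_eq ab_m.
  by rewrite /coord0 /coord3 /coord5 !aE !sum_ord3 /rayc /= sgnE; do !split; ring.
exists (fun n => nth 0 [:: r%:Z * (a i2 - b i2) - (a i1 - b i1); a i2 - b i2; a i4 - b i4] n).
move: ab0 ab3 ab5; rewrite /coord0 /coord3 /coord5 => ab0 ab3 ab5.
by apply: ord6P; rewrite sum_ord3 /rayc /= ?sgnE; lia.
Qed.

Lemma linEq_basisP L :
  [/\ linEq k r s t L (D 0) <-> coord0 L = 1 /\ coord3 L = 0 /\ coord5 L = 0,
      linEq k r s t L (D 3) <-> coord0 L = 0 /\ coord3 L = 1 /\ coord5 L = 0,
      linEq k r s t L (D 5) <-> coord0 L = 0 /\ coord3 L = 0 /\ coord5 L = 1,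
      linEq k r s t L (addD (D 0) (D 5)) <-> coord0 L = 1 /\ coord3 L = 0 /\ coord5 L = 1
    & linEq k r s t L (addD (D 3) (D 5)) <-> coord0 L = 0 /\ coord3 L = 1 /\ coord5 L = 1].
Proof.
split; apply: iff_trans (linEq_coordsP _ _) _.
all: rewrite [coord0 (_ _)]/coord0 [coord3 (_ _)]/coord3 [coord5 (_ _)]/coord5 /addD /D /=.
all: by rewrite ?(mulr0, addr0, subr0, add0r, oppr0).
Qed.

End IntersectionForm.

Definition zero_locus_Y0 (r s t : nat) (a b c : int) : Prop :=
  (a = 1 /\ b = 0 /\ c = 0) \/ (r = 0%N /\ (a = 0 /\ b = 1 /\ c = 0)) \/
  ((s = 0 /\ t = 0)%N /\ (a = 0 /\ b = 0 /\ c = 1)) \/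
  (t = 1%N /\ (a = 1 /\ b = 0 /\ c = 1)) \/
  ((r = 0 /\ s = 1)%N /\ (a = 0 /\ b = 1 /\ c = 1)) \/
  ((r = 0 /\ s = 2 /\ t = 2)%N /\ (a = 0 /\ b = 0 /\ c = 1)) \/
  ((r = 1 /\ s = 0 /\ t = 0)%N /\ (a = 0 /\ b = 1 /\ c = 1)) \/
  ((r = 1 /\ s = 1 /\ t = 2)%N /\ (a = 0 /\ b = 0 /\ c = 1)) \/
  ((r = 1 /\ s = 0 /\ t = 3)%N /\ (a = 0 /\ b = 0 /\ c = 1)) \/
  ((r = 2 /\ s = 0 /\ t = 2)%N /\ (a = 0 /\ b = 0 /\ c = 1)).

Definition zero_locus_Y1 (r s t : nat) (a b c : int) : Prop :=
  (a = 1 /\ b = 0 /\ c = 0) \/ (r = 0%N /\ (a = 0 /\ b = 1 /\ c = 0)) \/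
  ((s = 1 /\ t = 1)%N /\ (a = 1 /\ b = 0 /\ c = 1)).

Lemma c3poly_Y0_b0 (r s t : nat) (a c : int) : 0 <= a -> 0 <= c ->
  c3poly (sgn Y0) r%:Z s%:Z t%:Z a 0 c = 0 -> zero_locus_Y0 r s t a 0 c.
Proof.
move=> ha hc H; rewrite /c3poly /= in H; rewrite /zero_locus_Y0.
case_nonneg c.
- lia.
- case_nonneg t.
  + case_nonneg s.
    * case_nonneg a; [lia | absurd_by_sign].
    * absurd_by_sign.
  + case_nonneg c.
    * case_nonneg t.
      - lia.
      - case_nonneg t.
        + lia.
        + case_nonneg r.
          * case_nonneg a.
            - case_nonneg s; [absurd_by_sign | case_nonneg s; absurd_by_sign].
            - absurd_by_sign.
          * case_nonneg t; [lia | absurd_by_sign].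
    * case_nonneg r.
      - case_nonneg s; [case_nonneg a; absurd_by_sign | absurd_by_sign].
      - absurd_by_sign.
Qed.

Lemma c3poly_Y0_b_gt0 (r s t : nat) (a b c : int) : 0 <= a -> 0 <= b -> 0 <= c ->
  c3poly (sgn Y0) r%:Z s%:Z t%:Z a (b + 1) c = 0 -> zero_locus_Y0 r s t a (b + 1) c.
Proof.
move=> ha hb hc H; rewrite /c3poly /= in H; rewrite /zero_locus_Y0.
case_nonneg r.
- case_nonneg a.
  + case_nonneg c.
    * lia.
    * case_nonneg s; first absurd_by_sign.
      case_nonneg s; [case_nonneg c; [lia | absurd_by_sign] | absurd_by_sign].
  + case_nonneg c; absurd_by_sign.
- case_nonneg c; first absurd_by_sign.
  case_nonneg t; last absurd_by_sign.
  case_nonneg b; [case_nonneg c; [lia | absurd_by_sign] | absurd_by_sign].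
Qed.

Lemma c3poly_Y0_zeroP (r s t : nat) (a b c : int) : 0 <= a -> 0 <= b -> 0 <= c ->
  c3poly (sgn Y0) r%:Z s%:Z t%:Z a b c = 0 <-> zero_locus_Y0 r s t a b c.
Proof.
move=> ha hb hc; split.
  by case_nonneg b; [exact: c3poly_Y0_b0 | exact: c3poly_Y0_b_gt0].
by rewrite /zero_locus_Y0 /c3poly /= => sol; decompose [and or] sol; subst; lia.
Qed.

(* On Y1 the nef cone is a >= s c, so the first coordinate is written a + s c, a >= 0. *)
Lemma c3poly_Y1_zeroP (r s t : nat) (a b c : int) :
  (0 < s)%N -> (0 < t)%N -> 0 <= a -> 0 <= b -> 0 <= c ->
  c3poly (sgn Y1) r%:Z s%:Z t%:Z (a + s%:Z * c) b c = 0 <->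
  zero_locus_Y1 r s t (a + s%:Z * c) b c.
Proof.
move=> s_gt0 t_gt0 ha hb hc; rewrite /zero_locus_Y1; split=> [H|]; last first.
  by rewrite /c3poly /= => sol; decompose [and or] sol; subst; lia.
rewrite /c3poly /= in H.
case: s s_gt0 H => // s _ H; case: t t_gt0 H => // t _ H.
case_nonneg b.
- case_nonneg c; first lia.
  case_nonneg t; last absurd_by_sign.
  case_nonneg c; [lia | absurd_by_sign].
- case_nonneg c; last absurd_by_sign.
  case_nonneg r; last absurd_by_sign.
  case_nonneg a; [lia | absurd_by_sign].
Qed.

Theorem proposition3p7 (k : kind) (r s t : nat) (L : divisor)
    (T : 'I_6 -> 'I_6 -> 'I_6 -> int) :
  (k = Y1 -> (0 < s)%N /\ (0 < t)%N) ->
  IsIntersectionForm k r s t T ->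
  nef T L ->
  (c3J1 T L = 0 <->
      linEq k r s t L (D 0) \/
       (r = 0%N /\ linEq k r s t L (D 3)) \/
       (s = 0%N /\ t = 0%N) /\ linEq k r s t L (D 5) \/
       (* (a) *) (k = Y0 /\ t = 1%N) /\ linEq k r s t L (addD (D 0) (D 5)) \/
       (* (b) *) (k = Y1 /\ s = 1%N /\ t = 1%N) /\ linEq k r s t L (addD (D 0) (D 5)) \/
       (* (c) *) (r = 0%N /\ k = Y0 /\ s = 1%N) /\ linEq k r s t L (addD (D 3) (D 5)) \/
       (* (d) *) (r = 0%N /\ k = Y0 /\ s = 2%N /\ t = 2%N) /\ linEq k r s t L (D 5) \/
       (* (e) *) (r = 1%N /\ k = Y0 /\ s = 0%N /\ t = 0%N) /\ linEq k r s t L (addD (D 3) (D 5)) \/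
       (* (f) *) (r = 1%N /\ k = Y0 /\ s = 1%N /\ t = 2%N) /\ linEq k r s t L (D 5) \/
       (* (g) *) (r = 1%N /\ k = Y0 /\ s = 0%N /\ t = 3%N) /\ linEq k r s t L (D 5) \/
       (* (h) *) (r = 2%N /\ k = Y0 /\ s = 0%N /\ t = 2%N) /\ linEq k r s t L (D 5)).
Proof.
move=> hY1 HT nefL; rewrite (c3J1_coords HT).
have [a_ge0 b_ge0 c_ge0 a1_ge0] := nef_coords HT nefL.
have [E0 E3 E5 E05 E35] := linEq_basisP k r s t L.
move: (coord0 k r s L) (coord3 t L) (coord5 L)
  => a b c in a_ge0 b_ge0 c_ge0 a1_ge0 E0 E3 E5 E05 E35 *.
case: k {HT nefL} hY1 E0 E3 E5 E05 E35 a1_ge0 => [_ | /(_ erefl) [s_gt0 t_gt0]] E0 E3 E5 E05 E35.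
  have := c3poly_Y0_zeroP r s t a_ge0 b_ge0 c_ge0; rewrite /zero_locus_Y0.
  have : Y0 <> Y1 by []; tauto.
rewrite /sgn mulN1r mulNr => a1_ge0.
have := c3poly_Y1_zeroP r s_gt0 t_gt0 a1_ge0 b_ge0 c_ge0; rewrite subrK /zero_locus_Y1.
have : Y1 <> Y0 by []; have : s <> 0%N by apply/eqP; rewrite -lt0n.
tauto.
Qed.
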